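(* Let $n\ge 1$ and let $A\in\mathbb{C}^{2^n\times 2^n}$ be a matrix represented by a dictionary data structure with $s_0\ge 1$ data items, i.e. there are non-zero complex numbers $A_0,\dots,A_{s_0-1}$ (data values), sets $S_c(l)\subseteq[0,2^n-1]$ and injective maps $c_l:S_c(l)\to[0,2^n-1]$ ($l\in[0,s_0-1]$) such that the pairs $(c_l(j),j)$, $l\in[0,s_0-1]$, $j\in S_c(l)$, are pairwise distinct and $$A=\sum_{l=0}^{s_0-1}\sum_{j\in S_c(l)}A_l\,\ket{c_l(j)}\bra{j}.$$ Let $m=\lceil\log_2 s_0\rceil$. Consider registers idx ($m$ qubits), del ($1$ qubit) and a system register ($n$ qubits). Suppose $O_c$ is a unitary on idx$\otimes$del$\otimes$system such that for all $l\in[0,2^m-1]$, $j\in[0,2^n-1]$, $$O_c\ket{l}_{\rm idx}\ket{0}_{\rm del}\ket{j}=\begin{cases}\ket{l}_{\rm idx}\ket{0}_{\rm del}\ket{c_l(j)}, & \text{if } l\in[0,s_0-1]\text{ and } j\in S_c(l),\\ \ket{l}_{\rm idx}\ket{1}_{\rm del}\ket{j}, & \text{if } l\in[s_0,2^m-1]\text{ or } j\notin S_c(l),\end{cases}$$ and suppose $\mathrm{PREP},\mathrm{UNPREP}$ are unitaries on the $m$-qubit register idx with $$\mathrm{PREP}\ket{0}^{\otimes m}=\frac{1}{\sqrt{\sum_{l=0}^{s_0-1}|A_l|}}\sum_{l=0}^{s_0-1}\sqrt{A_l}\,\ket{l},\qquad \mathrm{UNPREP}^{\dagger}\ket{0}^{\otimes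 m}=\frac{1}{\sqrt{\sum_{l=0}^{s_0-1}|A_l|}}\sum_{l=0}^{s_0-1}\big(\sqrt{A_l}\big)^{*}\ket{l}.$$ Then $U_A=(\mathrm{UNPREP}\otimes I_{2^{n+1}})\,O_c\,(\mathrm{PREP}\otimes I_{2^{n+1}})$ is a block encoding of $A$ with subnormalization $\alpha=\sum_{l=0}^{s_0-1}|A_l|$, i.e. $$\big(\bra{0}^{\otimes m}_{\rm idx}\bra{0}_{\rm del}\otimes I_{2^n}\big)\,U_A\,\big(\ket{0}^{\otimes m}_{\rm idx}\ket{0}_{\rm del}\otimes I_{2^n}\big)=\frac{A}{\alpha}.$$
   Context: For a complex number $c=|c|e^{\imath\theta}$ (with $\theta$ its argument), the square root is defined as $\sqrt{c}=\sqrt{|c|}\,e^{\imath\theta/2}$; $(\cdot)^*$ denotes complex conjugation. $[a,b]=\{a,a+1,\dots,b\}$. $\ket{j}$ denotes the computational basis state encoding the binary representation of the integer $j$; $I_N$ is the $N\times N$ identity. *)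

From HB Require Import structures.
From mathcomp Require Import all_boot all_order all_algebra.
From mathcomp Require Import complex mxtens.
Set Implicit Arguments. Unset Strict Implicit. Unset Printing Implicit Defensive.
Import Order.TTheory GRing.Theory Num.Theory.
Local Open Scope ring_scope.

Definition ket {C : pzRingType} (d k : nat) : 'cV[C]_d :=
  \col_(i < d) (nat_of_ord i == k)%:R.

Definition adj {C : numClosedFieldType} {p q : nat} (U : 'M[C]_(p, q)) : 'M[C]_(q, p) :=
  (map_mx (fun x => x^*) U)^T.

Definition unitary {C : numClosedFieldType} {d : nat} (U : 'M[C]_d) : Prop :=
  adj U *m U = 1%:M /\ U *m adj U = 1%:M.

Lemma dim11 (k : nat) : (1 * 1 * k = k)%N.
Proof. by rewrite !mul1n. Qed.

From HB Require Import structures.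
From mathcomp Require Import all_boot all_order all_algebra.
From mathcomp Require Import complex mxtens.
Import Order.TTheory GRing.Theory Num.Theory.
Local Open Scope ring_scope.

Set Implicit Arguments. Unset Strict Implicit.

(** The top-left block of U_A is a sandwich <w, 0, i| O_c |v, 0, j> with
  v = PREP|0> and w = UNPREP^dagger|0>.  By linearity O_c acts on the terms
  |l, 0, j> of v, sending them to |l, 0, c_l(j)> or to |l, 1, j>; the latter
  are orthogonal to every <w, 0, i| because of the del qubit.  Hence the
  entry is the sum over l with j in S_c(l) and i = c_l(j) of
  conj(w_l) v_l = sqrt(A_l)^2 / alpha = A_l / alpha, which is the (i, j)
  entry of A / alpha. *)

Section AdjointAndKets.
Variable C : numClosedFieldType.

Lemma adjM a b d (X : 'M[C]_(a, b)) (Y : 'M[C]_(b, d)) :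
  adj (X *m Y) = adj Y *m adj X.
Proof. by rewrite /adj map_mxM trmx_mul. Qed.

Lemma adjK a b (X : 'M[C]_(a, b)) : adj (adj X) = X.
Proof. by apply/matrixP=> i j; rewrite !mxE conjCK. Qed.

Lemma adj1 a : adj (1%:M : 'M[C]_a) = 1%:M.
Proof. by rewrite /adj map_mx1 trmx1. Qed.

Lemma adj_tens a b d e (X : 'M[C]_(a, b)) (Y : 'M[C]_(d, e)) :
  adj (X *t Y) = adj X *t adj Y.
Proof. by rewrite /adj map_mxT trmx_tens. Qed.

Lemma adj_ket a k : adj (ket a k) = (ket a k)^T :> 'rV[C]_a.
Proof. by apply/matrixP=> i j; rewrite !mxE rmorph_nat. Qed.

Lemma tensmxZl a b d e (x : C) (X : 'M[C]_(a, b)) (Y : 'M[C]_(d, e)) :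
  (x *: X) *t Y = x *: (X *t Y).
Proof. by apply/matrixP=> i j; rewrite !mxE mulrA. Qed.

Lemma tensmx_suml a b d e (I : finType) (F : I -> 'M[C]_(a, b)) (Y : 'M[C]_(d, e)) :
  (\sum_i F i) *t Y = \sum_i (F i *t Y).
Proof.
apply/matrixP=> i j; rewrite !mxE summxE mulr_suml summxE.
by apply: eq_bigr => k _; rewrite !mxE.
Qed.

Lemma tensmx11 (X Y : 'M[C]_1) : (X *t Y) 0 0 = X 0 0 * Y 0 0.
Proof.
have idx00 : 0 = mxtens_index (0 : 'I_1, 0 : 'I_1) :> 'I_(1 * 1) by apply: val_inj.
by rewrite [in LHS]idx00 tensmxE.
Qed.

Lemma ket_delta a (i : 'I_a) : ket a i = delta_mx i 0 :> 'cV[C]_a.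
Proof. by apply/matrixP=> r s; rewrite !mxE ord1 eqxx andbT. Qed.

Lemma mxE_ket a b (X : 'M[C]_(a, b)) (i : 'I_a) (j : 'I_b) :
  X i j = (adj (ket a i) *m X *m ket b j) 0 0.
Proof. by rewrite adj_ket !ket_delta trmx_delta -rowE -colE !mxE. Qed.

Lemma ket_dot a k k' : (k < a)%N ->
  (adj (ket a k) *m ket a k') 0 0 = (k == k')%:R :> C.
Proof.
move=> lt_ka; have -> : ket a k = ket a (Ordinal lt_ka) by [].
by rewrite adj_ket ket_delta trmx_delta -rowE !mxE.
Qed.

Lemma dotC a (u v : 'cV[C]_a) : (adj u *m v) 0 0 = ((adj v *m u) 0 0)^*.
Proof.
rewrite /adj !mxE rmorph_sum; apply: eq_bigr => r _.
by rewrite !mxE rmorphM /= conjCK mulrC.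
Qed.

Lemma adj_tens3_dot a b d (x x' : 'cV[C]_a) (y y' : 'cV[C]_b) (z z' : 'cV[C]_d) :
  (adj (x *t y *t z) *m (x' *t y' *t z')) 0 0 =
  (adj x *m x') 0 0 * (adj y *m y') 0 0 * (adj z *m z') 0 0.
Proof. by rewrite !adj_tens !tensmx_mul !tensmx11. Qed.

Lemma ket_coord a s0 (q : 'I_s0 -> C) (l : 'I_s0) : (s0 <= a)%N ->
  (adj (ket a l) *m \sum_(l' < s0) q l' *: ket a l') 0 0 = q l.
Proof.
move=> le_s0a; have lt_la := leq_trans (ltn_ord l) le_s0a.
rewrite mulmx_sumr summxE (bigD1 l) //= big1 => [|l' /negbTE ll'].
  by rewrite -scalemxAr mxE ket_dot // eqxx mulr1 addr0.
by rewrite -scalemxAr mxE ket_dot // val_eqE eq_sym ll' mulr0.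
Qed.

Lemma ket_tens1 N k :
  ket (1 * 1 * N) k = (1%:M : 'M[C]_1) *t (1%:M : 'M_1) *t ket N k.
Proof.
apply/matrixP=> i j; case: (mxtens_indexP i) => i12 i3; case: (mxtens_indexP i12) => i1 i2.
have -> : j = mxtens_index (mxtens_index (0 : 'I_1, 0 : 'I_1), 0 : 'I_1).
  by apply: val_inj; rewrite ord1.
by rewrite !mxE !mxtens_indexK /= !ord1 !eqxx !mul1r !mul0n !add0n.
Qed.

Lemma tensmx_id_ket a b N (x : 'cV[C]_a) (y : 'cV[C]_b) k :
  (x *t y *t 1%:M) *m ket (1 * 1 * N) k = x *t y *t ket N k.
Proof.
(* The detour makes the column count [1 * 1 * 1] syntactic, so that [tensmx_mul] matches. *)
transitivity ((x *t y *t 1%:M) *m ((1%:M : 'M_1) *t (1%:M : 'M_1) *t ket N k)).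
  by rewrite ket_tens1.
by rewrite !tensmx_mul !mulmx1 mul1mx.
Qed.

Lemma block_entry a b N (x : 'cV[C]_a) (y : 'cV[C]_b) (X : 'M[C]_(a * b * N))
    (i j : 'I_(1 * 1 * N)) :
  (adj (x *t y *t 1%:M) *m X *m (x *t y *t 1%:M)) i j =
  (adj (x *t y *t ket N i) *m X *m (x *t y *t ket N j)) 0 0.
Proof. by rewrite mxE_ket !mulmxA -adjM -mulmxA !tensmx_id_ket. Qed.

Lemma tensmx_id_mul a b N (U : 'M[C]_a) (x : 'cV[C]_a) (y : 'cV[C]_b) (z : 'cV[C]_N) :
  (U *t 1%:M *t 1%:M) *m (x *t y *t z) = (U *m x) *t y *t z.
Proof. by rewrite !tensmx_mul !mul1mx. Qed.

Lemma adj_tensmx_id_mul a b N (U : 'M[C]_a) (x : 'cV[C]_a) (y : 'cV[C]_b)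
    (z : 'cV[C]_N) :
  adj (x *t y *t z) *m (U *t 1%:M *t 1%:M) = adj ((adj U *m x) *t y *t z).
Proof. by rewrite -tensmx_id_mul adjM !adj_tens adjK !adj1. Qed.

End AdjointAndKets.

Section SelectOracle.
Variables (C : numClosedFieldType) (M N s0 : nat).
Variables (Sc : 'I_s0 -> {set 'I_N}) (c : 'I_s0 -> 'I_N -> 'I_N).
Variable Oc : 'M[C]_(M * 2 * N).
Hypothesis le_s0M : (s0 <= M)%N.
Hypothesis Oc_in : forall (l : 'I_s0) (j : 'I_N), j \in Sc l ->
  Oc *m (ket M l *t ket 2 0 *t ket N j) = ket M l *t ket 2 0 *t ket N (c l j).
Hypothesis Oc_out : forall (l : 'I_s0) (j : 'I_N), j \notin Sc l ->
  Oc *m (ket M l *t ket 2 0 *t ket N j) = ket M l *t ket 2 1 *t ket N j.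

Lemma select_oracle_ket_entry (w : 'cV[C]_M) (l : 'I_s0) (i j : 'I_N) :
  (adj (w *t ket 2 0 *t ket N i) *m Oc *m (ket M l *t ket 2 0 *t ket N j)) 0 0 =
  (adj w *m ket M l) 0 0 * ((j \in Sc l) && (i == c l j))%:R.
Proof.
rewrite -mulmxA; case: (boolP (j \in Sc l)) => [jS | jNS].
  by rewrite Oc_in // adj_tens3_dot !ket_dot // val_eqE mulr1.
by rewrite Oc_out // adj_tens3_dot ket_dot // mulr0 mul0r.
Qed.

Lemma select_oracle_sandwich (q p : 'I_s0 -> C) (i j : 'I_N) :
  (adj ((\sum_l q l *: ket M l) *t ket 2 0 *t ket N i) *m Oc *m
    ((\sum_l p l *: ket M l) *t ket 2 0 *t ket N j)) 0 0 =
  \sum_l (q l)^* * p l * ((j \in Sc l) && (i == c l j))%:R.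
Proof.
rewrite ![in _ *t ket N j]tensmx_suml mulmx_sumr summxE; apply: eq_bigr => l _.
rewrite !tensmxZl -scalemxAr mxE select_oracle_ket_entry dotC ket_coord //.
by rewrite mulrCA mulrA.
Qed.

End SelectOracle.

Lemma dict_mx_entry (R : pzRingType) m n s0 (a : 'I_s0 -> R)
    (Sc : 'I_s0 -> {set 'I_n}) (c : 'I_s0 -> 'I_n -> 'I_m) (i : 'I_m) (j : 'I_n) :
  (\sum_l \sum_(j' in Sc l) a l *: delta_mx (c l j') j') i j =
  \sum_l a l * ((j \in Sc l) && (i == c l j))%:R.
Proof.
rewrite summxE; apply: eq_bigr => l _; rewrite summxE.
case: (boolP (j \in Sc l)) => [jS | jNS].
  rewrite (bigD1 j) //= big1 => [|j' /andP[_ /negbTE j'j]].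
    by rewrite !mxE eqxx andbT addr0.
  by rewrite !mxE [j == j']eq_sym j'j andbF mulr0.
rewrite big1 ?mulr0 // => j' j'S.
have /negbTE jj' : j != j' by apply: contraNneq jNS => ->.
by rewrite !mxE jj' andbF mulr0.
Qed.

Lemma sqrt_amplitude (C : numClosedFieldType) (alpha a : C) : 0 <= alpha ->
  ((sqrtC alpha)^-1 * (sqrtC a)^*)^* * ((sqrtC alpha)^-1 * sqrtC a) = alpha^-1 * a.
Proof.
move=> alpha_ge0; have s_ge0 : 0 <= (sqrtC alpha)^-1 by rewrite invr_ge0 sqrtC_ge0.
by rewrite rmorphM /= conjCK (geC0_conj s_ge0) mulrACA -!expr2 exprVn !sqrtCK.
Qed.

Local Open Scope complex_scope.

Theorem theorem1 (R : rcfType) (n s0 : nat) (hn : (1 <= n)%N) (hs0 : (1 <= s0)%N)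
  (A : 'M[R[i]]_(2 ^ n))
  (Aval : 'I_s0 -> R[i]) (Sc : 'I_s0 -> {set 'I_(2 ^ n)})
  (c : 'I_s0 -> 'I_(2 ^ n) -> 'I_(2 ^ n))
  (Oc : 'M[R[i]]_(2 ^ up_log 2 s0 * 2 * 2 ^ n))
  (PREP UNPREP : 'M[R[i]]_(2 ^ up_log 2 s0)) :
  let m := up_log 2 s0 in
  let ket3 (l d j : nat) : 'cV[R[i]]_(2 ^ m * 2 * 2 ^ n) :=
    ket (2 ^ m) l *t ket 2 d *t ket (2 ^ n) j in
  let alpha := \sum_(l < s0) `|Aval l| in
  (forall l, Aval l != 0) ->
  (forall l, {in Sc l &, injective (c l)}) ->
  (forall (l l' : 'I_s0) (j j' : 'I_(2 ^ n)), j \in Sc l -> j' \in Sc l' ->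
      (c l j, j) = (c l' j', j') -> (l, j) = (l', j')) ->
  A = \sum_(l < s0) \sum_(j in Sc l) Aval l *: delta_mx (c l j) j ->
  unitary Oc ->
  (forall (l : 'I_s0) (j : 'I_(2 ^ n)), j \in Sc l ->
      Oc *m ket3 l 0 j = ket3 l 0 (c l j)) ->
  (forall (l : nat) (j : 'I_(2 ^ n)), (l < 2 ^ m)%N ->
      ((s0 <= l)%N \/ exists l' : 'I_s0, nat_of_ord l' = l /\ j \notin Sc l') ->
      Oc *m ket3 l 0 j = ket3 l 1 j) ->
  unitary PREP -> unitary UNPREP ->
  PREP *m ket (2 ^ m) 0 =
    (sqrtC alpha)^-1 *: \sum_(l < s0) sqrtC (Aval l) *: ket (2 ^ m) l ->
  adj UNPREP *m ket (2 ^ m) 0 =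
    (sqrtC alpha)^-1 *: \sum_(l < s0) (sqrtC (Aval l))^* *: ket (2 ^ m) l ->
  let UA := (UNPREP *t 1%:M *t 1%:M) *m Oc *m (PREP *t 1%:M *t 1%:M)
            : 'M[R[i]]_(2 ^ m * 2 * 2 ^ n) in
  let P : 'M[R[i]]_(2 ^ m * 2 * 2 ^ n, 1 * 1 * 2 ^ n) :=
    ket (2 ^ m) 0 *t ket 2 0 *t 1%:M in
  castmx (dim11 (2 ^ n), dim11 (2 ^ n)) (adj P *m UA *m P) = alpha^-1 *: A.
Proof.
move=> m ket3 alpha _ _ _ defA _ Oc_in Oc_flag _ _ PREP0 UNPREP0 UA P.
have le_s0M : (s0 <= 2 ^ m)%N by apply: up_logP.
have alpha_ge0 : 0 <= alpha by rewrite sumr_ge0 // => l _; rewrite normr_ge0.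
have Oc_out (l : 'I_s0) (j : 'I_(2 ^ n)) : j \notin Sc l -> Oc *m ket3 l 0 j = ket3 l 1 j.
  by move=> jNS; apply: Oc_flag; [apply: leq_trans le_s0M | right; exists l].
have scale_sum (f : 'I_s0 -> R[i]) : (sqrtC alpha)^-1 *: \sum_l f l *: ket (2 ^ m) l =
    \sum_l ((sqrtC alpha)^-1 * f l) *: ket (2 ^ m) l.
  by rewrite scaler_sumr; apply: eq_bigr => l _; rewrite scalerA.
apply/matrixP => i j; rewrite castmxE /= block_entry /UA.
rewrite !mulmxA adj_tensmx_id_mul -mulmxA tensmx_id_mul.
rewrite UNPREP0 PREP0 !scale_sum (select_oracle_sandwich le_s0M Oc_in Oc_out).
rewrite defA mxE dict_mx_entry mulr_sumr; apply: eq_bigr => l _.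
by rewrite sqrt_amplitude // mulrA.
Qed.
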